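(* Let $k,t\ge0$ be integers. Then for every $\theta\in\mathbb{R}$, \[ \Big|\frac{d^k}{d\theta^k}P_t(e^{i\theta})\Big|,\ \Big|\frac{d^k}{d\theta^k}Q_t(e^{i\theta})\Big|\le 2^{kt+(t+1)/2}. \] In particular, with $T=2^{t+10}$ and $\alpha,\beta$ as in the context, $|\alpha^{(k)}(x)|,|\beta^{(k)}(x)|\le 2^{-10k}$ for every integer $k\ge1$ and every $x\in\mathbb{R}$.
   Context: Rudin–Shapiro polynomials: $P_0(z)=Q_0(z)=1$ and for $s\ge0$, $P_{s+1}(z)=P_s(z)+z^{2^s}Q_s(z)$, $Q_{s+1}(z)=P_s(z)-z^{2^s}Q_s(z)$. For the integer $t$, set $T:=2^{t+10}$ and for $x\in\mathbb{R}$ define $\alpha(x):=2^{-(t+1)/2}P_t(e^{ix/T})$ and $\beta(x):=2^{-(t+1)/2}Q_t(e^{ix/T})$. *)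

From Stdlib Require Import Reals.
From Coquelicot Require Import Coquelicot.
Open Scope R_scope.

(* Rudin--Shapiro polynomials as polynomial functions on the complex plane:
   RS s z = (P_s(z), Q_s(z)), with
   P_0 = Q_0 = 1, P_{s+1}(z) = P_s(z) + z^(2^s) Q_s(z),
   Q_{s+1}(z) = P_s(z) - z^(2^s) Q_s(z). *)
Fixpoint RS (s : nat) (z : Complex.C) : Complex.C * Complex.C :=
  match s with
  | O => (RtoC 1, RtoC 1)
  | S s' =>
      let (p, q) := RS s' z in
      (Cplus p (Cmult (pow_n z (2 ^ s')) q),
       Cminus p (Cmult (pow_n z (2 ^ s')) q))
  end.

Definition RS_P (s : nat) (z : Complex.C) : Complex.C := fst (RS s z).
Definition RS_Q (s : nat) (z : Complex.C) : Complex.C := snd (RS s z).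

Definition cexpi (theta : R) : Complex.C := (cos theta, sin theta).

Definition CDerive_n (f : R -> Complex.C) (k : nat) (x : R) : Complex.C :=
  (Derive_n (fun y => Re (f y)) k x, Derive_n (fun y => Im (f y)) k x).

Definition RS_T (t : nat) : R := 2 ^ (t + 10).
Definition RS_alpha (t : nat) (x : R) : Complex.C :=
  Cmult (RtoC (Rpower 2 (- (INR t + 1) / 2))) (RS_P t (cexpi (x / RS_T t))).
Definition RS_beta (t : nat) (x : R) : Complex.C :=
  Cmult (RtoC (Rpower 2 (- (INR t + 1) / 2))) (RS_Q t (cexpi (x / RS_T t))).

From Stdlib Require Import Reals Lra.
From Coquelicot Require Import Coquelicot.
Open Scope R_scope.

(* Write r = 2^s.  Differentiating
   P_{s+1}(e^{ix}) = P_s(e^{ix}) + e^{irx} Q_s(e^{ix}) k times gives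
   P_s^{(k)} + e^{irx} H with H = (ir + d/dx)^k Q_s(e^{ix}), and similarly for Q_{s+1}
   with a minus sign.  If |Q_s^{(j)}| <= c r^j for all j, expanding the power shows
   |H - Q_s^{(k)}| <= c ((2r)^k - r^k).  The parallelogram law
   |a + b|^2 + |a - b|^2 = 2 (|a|^2 + |b|^2) then propagates the invariant
   |P_s^{(k)}|^2 + |Q_s^{(k)}|^2 <= (2^{(s+1)/2} r^k)^2 from s to s + 1.
   For alpha and beta, each derivative brings out a factor 1/T = 2^{-t-10}. *)

Definition is_Cderive (f : R -> C) (x : R) (l : C) : Prop :=
  is_derive (fun y => Re (f y)) x (Re l) /\ is_derive (fun y => Im (f y)) x (Im l).

Definition is_Cderive_seq (F : nat -> R -> C) : Prop :=
  forall k x, is_Cderive (F k) x (F (S k) x).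

Ltac C_ring := apply injective_projections; simpl; ring.

Lemma is_Cderive_val f x l l' : is_Cderive f x l -> l = l' -> is_Cderive f x l'.
Proof. now intros H <-. Qed.

Lemma is_Cderive_const (c : C) x : is_Cderive (fun _ => c) x 0.
Proof. split; apply (is_derive_const (V := R_NormedModule)). Qed.

Lemma is_Cderive_plus f g x df dg :
  is_Cderive f x df -> is_Cderive g x dg ->
  is_Cderive (fun y => f y + g y)%C x (df + dg)%C.
Proof. intros [Hfr Hfi] [Hgr Hgi]; split; now apply @is_derive_plus. Qed.

Lemma is_Cderive_minus f g x df dg :
  is_Cderive f x df -> is_Cderive g x dg ->
  is_Cderive (fun y => f y - g y)%C x (df - dg)%C.
Proof. intros [Hfr Hfi] [Hgr Hgi]; split; now apply @is_derive_minus. Qed.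

Lemma is_derive_val (f : R -> R) x l l' : is_derive f x l -> l = l' -> is_derive f x l'.
Proof. now intros H <-. Qed.

Lemma is_derive_Rmult (f g : R -> R) x df dg :
  is_derive f x df -> is_derive g x dg ->
  is_derive (fun y => f y * g y) x (df * g x + f x * dg).
Proof. intros Hf Hg. apply (is_derive_mult f g); auto using Rmult_comm. Qed.

Lemma is_Cderive_mult f g x df dg :
  is_Cderive f x df -> is_Cderive g x dg ->
  is_Cderive (fun y => f y * g y)%C x (df * g x + f x * dg)%C.
Proof.
  intros [Hfr Hfi] [Hgr Hgi]; split; simpl; eapply is_derive_val.
  - apply (is_derive_minus _ _ _ _ _ (is_derive_Rmult _ _ _ _ _ Hfr Hgr)
                                     (is_derive_Rmult _ _ _ _ _ Hfi Hgi)).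
  - unfold minus, plus, opp; simpl; unfold Re, Im; ring.
  - apply (is_derive_plus _ _ _ _ _ (is_derive_Rmult _ _ _ _ _ Hfr Hgi)
                                    (is_derive_Rmult _ _ _ _ _ Hfi Hgr)).
  - unfold plus; simpl; unfold Re, Im; ring.
Qed.

Lemma is_Cderive_cexpi (a x : R) :
  is_Cderive (fun y => cexpi (a * y)) x ((0, a) * cexpi (a * x))%C.
Proof. split; simpl; auto_derive; auto; ring. Qed.

Lemma is_Cderive_comp_scal f (u x : R) l :
  is_Cderive f (x * u) l -> is_Cderive (fun y => f (y * u)) x (u * l)%C.
Proof.
  intros [Hr Hi]; split; simpl; eapply is_derive_val.
  - apply (is_derive_comp (fun y => Re (f y)) (fun y => y * u)); [exact Hr | auto_derive; auto].
  - unfold scal; simpl; unfold mult; simpl; unfold Re, Im; ring.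
  - apply (is_derive_comp (fun y => Im (f y)) (fun y => y * u)); [exact Hi | auto_derive; auto].
  - unfold scal; simpl; unfold mult; simpl; unfold Re, Im; ring.
Qed.

Lemma Derive_n_of_is_derive_seq (F : nat -> R -> R) :
  (forall k x, is_derive (F k) x (F (S k) x)) ->
  forall k x, Derive_n (F 0%nat) k x = F k x.
Proof.
  intros HF k; induction k as [|k IH]; intros x; [reflexivity|].
  simpl; rewrite (Derive_ext _ (F k) x IH); apply is_derive_unique, HF.
Qed.

Lemma CDerive_n_of_is_Cderive_seq F f k x :
  is_Cderive_seq F -> (forall y, f y = F 0%nat y) -> CDerive_n f k x = F k x.
Proof.
  intros HF Hf; unfold CDerive_n.
  rewrite (Derive_n_ext (fun y => Re (f y)) (fun y => Re (F 0%nat y))),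
          (Derive_n_ext (fun y => Im (f y)) (fun y => Im (F 0%nat y)))
    by (intros; now rewrite Hf).
  rewrite (Derive_n_of_is_derive_seq (fun k y => Re (F k y))),
          (Derive_n_of_is_derive_seq (fun k y => Im (F k y))) by apply HF.
  now destruct (F k x).
Qed.

Lemma is_Cderive_seq_scale F (c u : R) :
  is_Cderive_seq F -> is_Cderive_seq (fun k y => RtoC (c * u ^ k) * F k (y * u)%R)%C.
Proof.
  intros HF k x; eapply is_Cderive_val.
  - apply is_Cderive_mult; [apply is_Cderive_const | apply is_Cderive_comp_scal, HF].
  - simpl; C_ring.
Qed.

Lemma Cmod_imag (a : R) : Cmod (0, a) = Rabs a.
Proof.
  unfold Cmod; simpl; rewrite <- sqrt_Rsqr_abs; f_equal; unfold Rsqr; ring.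
Qed.

Lemma Cmod_cexpi x : Cmod (cexpi x) = 1.
Proof.
  unfold Cmod, cexpi; cbn [fst snd].
  replace (cos x ^ 2 + sin x ^ 2) with 1 by (rewrite <- (sin2_cos2 x); unfold Rsqr; ring).
  apply sqrt_1.
Qed.

Lemma Cmod_parallelogram u v :
  Cmod (u + v)%C ^ 2 + Cmod (u - v)%C ^ 2 = 2 * (Cmod u ^ 2 + Cmod v ^ 2).
Proof. rewrite !Cmod2_alt; unfold Re, Im; simpl; ring. Qed.

Lemma le_of_sum_sq_le a q b : 0 <= b -> a ^ 2 + q ^ 2 <= b ^ 2 -> q <= b.
Proof.
  intros Hb Hs; apply Rsqr_incr_0_var; [| exact Hb].
  pose proof (pow2_ge_0 a); unfold Rsqr; simpl in *; lra.
Qed.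

Lemma sum_sq_le_perturb p q h e M :
  0 <= M -> 0 <= h -> 0 <= e -> p ^ 2 + q ^ 2 <= M ^ 2 -> h <= q + e ->
  p ^ 2 + h ^ 2 <= (M + e) ^ 2.
Proof.
  intros HM Hh He Hs Hhq.
  assert (q <= M) by now apply (le_of_sum_sq_le p).
  assert (h ^ 2 <= (q + e) ^ 2) by nra.
  nra.
Qed.

(* If [G j] is the [j]-th derivative of [g], then [twist a G j] is the [j]-th
   derivative of [(ia + d/dx) g]; this operator appears because
   [(e^{iax} g)' = e^{iax} (ia + d/dx) g]. *)
Definition twist (a : R) (G : nat -> R -> C) : nat -> R -> C :=
  fun j x => ((0, a) * G j x + G (S j) x)%C.

Lemma is_Cderive_seq_twist a G : is_Cderive_seq G -> is_Cderive_seq (twist a G).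
Proof.
  intros HG j x; eapply is_Cderive_val.
  - apply is_Cderive_plus; [apply is_Cderive_mult; [apply is_Cderive_const |] |]; apply HG.
  - unfold twist; C_ring.
Qed.

Lemma is_Cderive_seq_cexpi_mul a G :
  is_Cderive_seq G ->
  is_Cderive_seq (fun k x => cexpi (a * x) * Nat.iter k (twist a) G 0%nat x)%C.
Proof.
  intros HG k x.
  assert (Hk : is_Cderive_seq (Nat.iter k (twist a) G)).
  { induction k as [|k IH]; [exact HG | now apply is_Cderive_seq_twist]. }
  eapply is_Cderive_val.
  - apply is_Cderive_mult; [apply is_Cderive_cexpi | apply Hk].
  - simpl; unfold twist; C_ring.
Qed.

Section TwistBounds.

Variables (G : nat -> R -> C) (c r : R).
Hypothesis r_ge0 : 0 <= r.
Hypothesis G_bound : forall j x, Cmod (G j x) <= c * r ^ j.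

Lemma Cmod_twist_le (H : nat -> R -> C) j x :
  Cmod (twist r H j x) <= r * Cmod (H j x) + Cmod (H (S j) x).
Proof.
  unfold twist; eapply Rle_trans; [apply Cmod_triangle|].
  rewrite Cmod_mult, Cmod_imag, Rabs_pos_eq by exact r_ge0; lra.
Qed.

Lemma iter_twist_bound m j x :
  Cmod (Nat.iter m (twist r) G j x) <= c * (2 * r) ^ m * r ^ j.
Proof.
  revert j; induction m as [|m IH]; intros j; simpl.
  - rewrite Rmult_1_r; apply G_bound.
  - eapply Rle_trans; [apply Cmod_twist_le|].
    pose proof (IH j); pose proof (IH (S j)) as IH'; simpl in IH'.
    assert (r * Cmod (Nat.iter m (twist r) G j x) <= r * (c * (2 * r) ^ m * r ^ j))
      by (apply Rmult_le_compat_l; auto).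
    nra.
Qed.

Lemma iter_twist_sub_bound m j x :
  Cmod (Nat.iter m (twist r) G j x - G (m + j)%nat x)%C <= c * ((2 * r) ^ m - r ^ m) * r ^ j.
Proof.
  revert j; induction m as [|m IH]; intros j; simpl.
  - replace (G j x - G j x)%C with (RtoC 0) by C_ring; rewrite Cmod_0; lra.
  - replace (twist r (Nat.iter m (twist r) G) j x - G (S (m + j)) x)%C
      with ((0, r) * Nat.iter m (twist r) G j x
            + (Nat.iter m (twist r) G (S j) x - G (m + S j)%nat x))%C
      by (rewrite Nat.add_succ_r; unfold twist; C_ring).
    eapply Rle_trans; [apply Cmod_triangle|].
    rewrite Cmod_mult, Cmod_imag, Rabs_pos_eq by exact r_ge0.
    pose proof (iter_twist_bound m j x); specialize (IH (S j)); simpl in IH.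
    assert (r * Cmod (Nat.iter m (twist r) G j x) <= r * (c * (2 * r) ^ m * r ^ j))
      by (apply Rmult_le_compat_l; auto).
    nra.
Qed.

End TwistBounds.

(* The [k]-th derivatives of [P_s(e^{ix})] and [Q_s(e^{ix})]; the [k]-th
   derivative of [e^{i 2^s x} Q_s(e^{ix})] is [e^{i 2^s x} (i 2^s + d/dx)^k Q_s(e^{ix})]. *)
Fixpoint RS_derivs (s : nat) : nat -> R -> C * C :=
  match s with
  | O => fun k _ => match k with O => (RtoC 1, RtoC 1) | S _ => (RtoC 0, RtoC 0) end
  | S s' => fun k x =>
      let w := (cexpi (2 ^ s' * x)
                * Nat.iter k (twist (2 ^ s')) (fun j y => snd (RS_derivs s' j y)) 0%nat x)%C in
      (fst (RS_derivs s' k x) + w, fst (RS_derivs s' k x) - w)%C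
  end.

Lemma pow_n_cexpi x n : pow_n (cexpi x) n = cexpi (INR n * x).
Proof.
  induction n as [|n IH]; simpl pow_n.
  - unfold cexpi; now rewrite Rmult_0_l, cos_0, sin_0.
  - rewrite IH, S_INR; unfold cexpi, mult; simpl.
    replace ((INR n + 1) * x) with (x + INR n * x) by ring.
    rewrite cos_plus, sin_plus; C_ring.
Qed.

Lemma RS_derivs_0 s x : RS_derivs s 0 x = RS s (cexpi x).
Proof.
  induction s as [|s IH]; [reflexivity|]; simpl.
  rewrite IH; destruct (RS s (cexpi x)) as [p q]; simpl fst; simpl snd.
  rewrite pow_n_cexpi, pow_INR; replace (INR 2) with 2 by (simpl; ring).
  reflexivity.
Qed.

Lemma is_Cderive_seq_RS_derivs s :
  is_Cderive_seq (fun k y => fst (RS_derivs s k y)) /\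
  is_Cderive_seq (fun k y => snd (RS_derivs s k y)).
Proof.
  induction s as [|s [HP HQ]].
  - split; intros [|k] x; simpl; apply is_Cderive_const.
  - pose proof (is_Cderive_seq_cexpi_mul (2 ^ s) _ HQ) as Hw.
    split; intros k x.
    + exact (is_Cderive_plus _ _ _ _ _ (HP k x) (Hw k x)).
    + exact (is_Cderive_minus _ _ _ _ _ (HP k x) (Hw k x)).
Qed.

Lemma RS_derivs_bound s k x :
  Cmod (fst (RS_derivs s k x)) ^ 2 + Cmod (snd (RS_derivs s k x)) ^ 2
  <= (sqrt 2 ^ S s * (2 ^ s) ^ k) ^ 2.
Proof.
  assert (Hsqrt2 : sqrt 2 ^ 2 = 2) by (apply pow2_sqrt; lra).
  revert k x; induction s as [|s IH]; intros k x.
  - destruct k; simpl; [rewrite Cmod_1 | rewrite Cmod_0]; simpl in Hsqrt2; nra.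
  - set (c := sqrt 2 ^ S s); set (r := 2 ^ s).
    assert (Hr : 0 <= r) by (apply pow_le; lra).
    assert (Hc : 0 <= c) by (apply pow_le, sqrt_pos).
    assert (HQ : forall j y, Cmod (snd (RS_derivs s j y)) <= c * r ^ j).
    { intros j y; apply (le_of_sum_sq_le (Cmod (fst (RS_derivs s j y))));
        [apply Rmult_le_pos, pow_le |]; auto. }
    set (Q := snd (RS_derivs s k x)).
    set (H := Nat.iter k (twist r) (fun j y => snd (RS_derivs s j y)) 0%nat x).
    assert (HH : Cmod H <= Cmod Q + c * ((2 * r) ^ k - r ^ k)).
    { pose proof (iter_twist_sub_bound _ c r Hr HQ k 0 x) as E.
      rewrite Nat.add_0_r, pow_O, Rmult_1_r in E; fold H Q in E.
      replace H with (Q + (H - Q))%C at 1 by C_ring.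
      eapply Rle_trans; [apply Cmod_triangle | lra]. }
    assert (He : 0 <= c * ((2 * r) ^ k - r ^ k)).
    { apply Rmult_le_pos; [exact Hc |]. pose proof (pow_incr r (2 * r) k); lra. }
    assert (HM : 0 <= c * r ^ k) by (apply Rmult_le_pos, pow_le; auto).
    pose proof (sum_sq_le_perturb _ _ _ _ _ HM (Cmod_ge_0 H) He (IH k x) HH) as Hperturb.
    simpl RS_derivs; fold r c H; simpl fst; simpl snd.
    rewrite Cmod_parallelogram, Cmod_mult, Cmod_cexpi, Rmult_1_l.
    replace ((sqrt 2 ^ S (S s) * (2 ^ S s) ^ k) ^ 2)
      with (sqrt 2 ^ 2 * (c * r ^ k + c * ((2 * r) ^ k - r ^ k)) ^ 2)
      by (unfold c, r; simpl; ring).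
    rewrite Hsqrt2; lra.
Qed.

Definition RS_part (b : bool) : C * C -> C := if b then fst else snd.

Lemma is_Cderive_seq_RS_part b s :
  is_Cderive_seq (fun k y => RS_part b (RS_derivs s k y)).
Proof. destruct b; apply is_Cderive_seq_RS_derivs. Qed.

Lemma RS_part_derivs_bound b s k x :
  Cmod (RS_part b (RS_derivs s k x)) <= sqrt 2 ^ S s * (2 ^ s) ^ k.
Proof.
  pose proof (RS_derivs_bound s k x) as Hs.
  assert (0 <= sqrt 2 ^ S s * (2 ^ s) ^ k)
    by (apply Rmult_le_pos; [apply pow_le, sqrt_pos | apply pow_le, pow_le; lra]).
  destruct b; simpl; eapply le_of_sum_sq_le; eauto; rewrite Rplus_comm; eauto.
Qed.

Lemma Rpower_2_half_succ t : Rpower 2 ((INR t + 1) / 2) = sqrt 2 ^ S t.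
Proof.
  replace ((INR t + 1) / 2) with (/ 2 * INR (S t)) by (rewrite S_INR; field).
  rewrite <- Rpower_mult, Rpower_sqrt by lra.
  apply Rpower_pow, sqrt_lt_R0; lra.
Qed.

Lemma RS_part_deriv_bound b k t theta :
  Cmod (CDerive_n (fun th => RS_part b (RS t (cexpi th))) k theta)
  <= Rpower 2 (INR (k * t) + (INR t + 1) / 2).
Proof.
  rewrite (CDerive_n_of_is_Cderive_seq _ _ k theta (is_Cderive_seq_RS_part b t))
    by (intros; now rewrite RS_derivs_0).
  rewrite Rpower_plus, Rpower_pow, Rpower_2_half_succ, Nat.mul_comm, pow_mult by lra.
  rewrite Rmult_comm; apply RS_part_derivs_bound.
Qed.

Lemma RS_part_scaled_deriv_bound b t k x :
  Cmod (CDerive_n (fun y => RtoC (Rpower 2 (- (INR t + 1) / 2))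
                            * RS_part b (RS t (cexpi (y / RS_T t))))%C k x)
  <= Rpower 2 (- (10 * INR k)).
Proof.
  set (c := Rpower 2 (- (INR t + 1) / 2)); set (u := / RS_T t).
  rewrite (CDerive_n_of_is_Cderive_seq _ _ k x
             (is_Cderive_seq_scale _ c u (is_Cderive_seq_RS_part b t)))
    by (intros y; now rewrite RS_derivs_0, pow_O, Rmult_1_r).
  assert (Hc : c = / sqrt 2 ^ S t).
  { unfold c; replace (- (INR t + 1) / 2) with (- ((INR t + 1) / 2)) by field.
    now rewrite Rpower_Ropp, Rpower_2_half_succ. }
  assert (Hsqrt2 : 0 < sqrt 2) by (apply sqrt_lt_R0; lra).
  assert (Hcu : 0 <= c * u ^ k).
  { rewrite Hc; unfold u, RS_T.
    apply Rmult_le_pos; apply Rlt_le; [| apply pow_lt]; apply Rinv_0_lt_compat, pow_lt; lra. }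
  rewrite Cmod_mult, Cmod_R, Rabs_pos_eq by exact Hcu.
  eapply Rle_trans; [apply Rmult_le_compat_l, RS_part_derivs_bound; exact Hcu |].
  replace (10 * INR k) with (INR (10 * k)) by (rewrite mult_INR; simpl; ring).
  rewrite Rpower_Ropp, Rpower_pow, pow_mult, Hc by lra.
  unfold u, RS_T; rewrite pow_add, pow_inv, Rpow_mult_distr.
  right; field; repeat split; repeat apply pow_nonzero; lra.
Qed.

Theorem lemma3p6 :
  (forall (k t : nat) (theta : R),
      Cmod (CDerive_n (fun th => RS_P t (cexpi th)) k theta)
        <= Rpower 2 (INR (k * t) + (INR t + 1) / 2) /\
      Cmod (CDerive_n (fun th => RS_Q t (cexpi th)) k theta)
        <= Rpower 2 (INR (k * t) + (INR t + 1) / 2)) /\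
  (forall (t k : nat) (x : R), (1 <= k)%nat ->
      Cmod (CDerive_n (RS_alpha t) k x) <= Rpower 2 (- (10 * INR k)) /\
      Cmod (CDerive_n (RS_beta t) k x) <= Rpower 2 (- (10 * INR k))).
Proof.
  split.
  - intros k t theta; split; [apply (RS_part_deriv_bound true) | apply (RS_part_deriv_bound false)].
  - (* the bound holds for k = 0 as well *)
    intros t k x _.
    split; [apply (RS_part_scaled_deriv_bound true) | apply (RS_part_scaled_deriv_bound false)].
Qed.
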